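(* Let $K$ be a field, $c\in K\setminus\{0\}$, $n\ge1$, let $f$ be a $c$-frieze of order $n$ over $K$, and put $s=f(0,n)$, $t=f(1,n+1)$. Then for every integer $k$ with $0\le k\le n$ and every $i\in\mathbb{Z}$: (a) $f(2i,2i+k-1)=\dfrac{f(2i-1,2i+k-1)\,f(2i,2i+n-1)}{t}+\dfrac{f(2i-2,2i+k-1)}{c}$; (b) $f(2i+1,2i+k)=\dfrac{f(2i,2i+k)\,f(2i+1,2i+n)}{s}+\dfrac{f(2i-1,2i+k)}{c}$.
   Context: The $c$-continuant polynomials $P_k=P_k^c$ ($k\ge-1$) are defined by $P_{-1}=0$, $P_0=1$, and for $k\ge1$, $P_k(x_1,\dots,x_k)=x_kP_{k-1}(x_1,\dots,x_{k-1})+cP_{k-2}(x_1,\dots,x_{k-2})$. A family $(x_i)_{i\in\mathbb{Z}}$ in $K$ is $n$-admissible if $P_{n+2}(x_i,\dots,x_{i+n+1})=0$ for all $i$. Let $\mathbb{B}_n=\{(i,j)\in\mathbb{Z}^2:-2\le j-i\le n+1\}$. A $c$-frieze of order $n$ is a function $f:\mathbb{B}_n\to K$ for which there is an $n$-admissible family $(x_i)$ with $f(i,j)=P_{j-i+1}(x_i,\dots,x_j)$ for all $(i,j)\in\mathbb{B}_n$. It is known that $f(2i,2i+n)=s$, $f(2i+1,2i+n+1)=t$ for all $i$ and $st=(-c)^{n+1}$, so $s,t\neq0$. *)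

From HB Require Import structures.
From mathcomp Require Import all_boot all_order all_algebra.
Set Implicit Arguments. Unset Strict Implicit. Unset Printing Implicit Defensive.
Import Order.TTheory GRing.Theory Num.Theory.
Local Open Scope ring_scope.

(* cont c x i k = P_k^c(x_i, ..., x_{i+k-1}) for k >= 0 *)
Fixpoint cont (K : fieldType) (c : K) (x : int -> K) (i : int) (k : nat) : K :=
  match k with
  | 0%N => 1
  | 1%N => x i
  | (k1.+1 as k2).+1 => x (i + k2%:Z) * cont c x i k2 + c * cont c x i k1
  end.

(* contZ c x i m = P_m^c(x_i, ..., x_{i+m-1}) for m >= -1 (P_{-1} = 0) *)
Definition contZ (K : fieldType) (c : K) (x : int -> K) (i : int) (m : int) : K :=
  match m with
  | Posz k => cont c x i k
  | Negz _ => 0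
  end.

Definition admissible (K : fieldType) (c : K) (n : nat) (x : int -> K) : Prop :=
  forall i : int, cont c x i n.+2 = 0.

Definition inB (n : nat) (i j : int) : Prop := -2 <= j - i <= n.+1%:Z.

(* f is a c-frieze of order n (only its values on B_n matter) *)
Definition is_frieze (K : fieldType) (c : K) (n : nat) (f : int -> int -> K) : Prop :=
  exists x : int -> K, admissible c n x /\
    forall i j : int, inB n i j -> f i j = contZ c x i (j - i + 1).

From HB Require Import structures.
From mathcomp Require Import all_boot all_order all_algebra.
From mathcomp Require Import zify ring.
Import Order.TTheory GRing.Theory Num.Theory.
Local Open Scope ring_scope.

(* Continuants can be expanded from the left as well as from the right, and
   satisfy the determinant identity
   P_{k+1}(i) P_{k+1}(i+1) - P_{k+2}(i) P_k(i+1) = (-c)^(k+1).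
   For an n-admissible family the second term vanishes when k = n, so the
   diagonal P_{n+1}(i) P_{n+1}(i+1) = (-c)^(n+1) is nowhere zero and
   2-periodic.  Admissibility at b, expanded from the left, expresses x_b as
   -c P_n(b+2) / P_{n+1}(b+1); substituting this into the left expansion of
   P_{k+2}(b) gives the recurrence, and periodicity identifies P_{n+1}(b+1)
   with s or t according to the parity of b. *)

Section Continuant.
Variables (K : fieldType) (c : K) (x : int -> K).
Local Notation P := (cont c x).

Lemma contSS i k : P i k.+2 = x (i + k.+1%:Z) * P i k.+1 + c * P i k.
Proof. by []. Qed.

Lemma contSS_left_pair k i :
  P i k.+2 = x i * P (i + 1) k.+1 + c * P (i + 2) k /\
  P i k.+3 = x i * P (i + 1) k.+2 + c * P (i + 2) k.+1.
Proof.
elim: k i => [|k IHk] i.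
  rewrite /= (_ : i + 1 + 1%:Z = i + 2); last by lia.
  by rewrite (_ : i + 1%:Z = i + 1) //; split; ring.
have [IH1 IH2] := IHk i; split; first exact: IH2.
rewrite contSS IH2 IH1 (contSS (i + 1) k.+1) (contSS (i + 2) k).
have -> : i + 1 + k.+2%:Z = i + k.+3%:Z by lia.
have -> : i + 2 + k.+1%:Z = i + k.+3%:Z by lia.
ring.
Qed.

Lemma contSS_left i k : P i k.+2 = x i * P (i + 1) k.+1 + c * P (i + 2) k.
Proof. exact: (contSS_left_pair k i).1. Qed.

Lemma cont_det k i :
  P i k.+1 * P (i + 1) k.+1 - P i k.+2 * P (i + 1) k = (- c) ^+ k.+1.
Proof.
elim: k i => [|k IHk] i; first by rewrite /= (_ : i + 1%:Z = i + 1) //; ring.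
rewrite (contSS (i + 1) k) (contSS i k.+1) exprS -(IHk i).
have -> : i + 1 + k.+1%:Z = i + k.+2%:Z by lia.
ring.
Qed.

Section Admissible.
Variable n : nat.
Hypotheses (c_neq0 : c != 0) (adm : admissible c n x).

Lemma cont_diag_mul i : P i n.+1 * P (i + 1) n.+1 = (- c) ^+ n.+1.
Proof. by rewrite -(cont_det n i) adm mul0r subr0. Qed.

Lemma cont_diag_neq0 i : P i n.+1 != 0.
Proof.
apply/eqP => P0; move/eqP: (cont_diag_mul i).
by rewrite P0 mul0r eq_sym expf_eq0 oppr_eq0 (negbTE c_neq0) andbF.
Qed.

Lemma cont_diag_shift2 i : P (i + 2) n.+1 = P i n.+1.
Proof.
apply: (mulIf (cont_diag_neq0 (i + 1))).
rewrite [RHS]cont_diag_mul -(cont_diag_mul (i + 1)) mulrC.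
by rewrite -addrA.
Qed.

Lemma cont_diag_shift_even i j : P (i + 2 * j) n.+1 = P i n.+1.
Proof.
have shift_nat a m : P (a + 2 * m%:Z) n.+1 = P a n.+1.
  elim: m => [|m IHm]; first by rewrite mulr0 addr0.
  have -> : a + 2 * m.+1%:Z = a + 2 * m%:Z + 2 by lia.
  by rewrite cont_diag_shift2.
case: j => m; first exact: shift_nat.
rewrite -(shift_nat _ m.+1) -addrA; congr P; rewrite NegzE; lia.
Qed.

Lemma cont_admissible_recurrence b k :
  P (b + 2) k = P (b + 1) k.+1 * P (b + 2) n / P (b + 1) n.+1 + P b k.+2 / c.
Proof.
have x_b : x b = - c * P (b + 2) n / P (b + 1) n.+1.
  apply: (mulIf (cont_diag_neq0 (b + 1))).
  rewrite mulfVK ?cont_diag_neq0 //; apply/eqP.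
  by rewrite -subr_eq0 mulNr opprK -contSS_left adm.
rewrite (contSS_left b) x_b; field.
by rewrite c_neq0 cont_diag_neq0.
Qed.

End Admissible.
End Continuant.

Section Frieze.
Variables (K : fieldType) (c : K) (n : nat) (x : int -> K) (f : int -> int -> K).
Hypotheses (c_neq0 : c != 0) (adm : admissible c n x).
Hypothesis f_cont : forall i j, inB n i j -> f i j = contZ c x i (j - i + 1).

Lemma frieze_cont i j (m : nat) :
  (m <= n.+2)%N -> j - i + 1 = m%:Z -> f i j = cont c x i m.
Proof. by move=> m_le E; rewrite f_cont ?E // /inB; lia. Qed.

Lemma frieze_diag_shift_even i j :
  f (i + 2 * j) (i + 2 * j + n%:Z) = f i (i + n%:Z).
Proof.
rewrite !(@frieze_cont _ _ n.+1) //; try lia.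
exact: cont_diag_shift_even.
Qed.

Lemma frieze_recurrence b k : (k <= n)%N ->
  f (b + 2) (b + k%:Z + 1)
    = f (b + 1) (b + k%:Z + 1) * f (b + 2) (b + n%:Z + 1) / f (b + 1) (b + 1 + n%:Z)
      + f b (b + k%:Z + 1) / c.
Proof.
move=> k_le.
rewrite (@frieze_cont (b + 2) _ k) ?(@frieze_cont (b + 1) (b + k%:Z + 1) k.+1)
  ?(@frieze_cont (b + 2) _ n) ?(@frieze_cont (b + 1) _ n.+1)
  ?(@frieze_cont b _ k.+2) //; try lia.
exact: cont_admissible_recurrence.
Qed.

End Frieze.

Theorem mainTheorem9 (K : fieldType) (c : K) (n : nat) (f : int -> int -> K) :
  c != 0 -> (1 <= n)%N -> is_frieze c n f ->
  let s := f 0 n%:Z in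
  let t := f 1 (n.+1)%:Z in
  forall (k : nat) (i : int), (k <= n)%N ->
    f (2 * i) (2 * i + k%:Z - 1)
      = f (2 * i - 1) (2 * i + k%:Z - 1) * f (2 * i) (2 * i + n%:Z - 1) / t
        + f (2 * i - 2) (2 * i + k%:Z - 1) / c
    /\
    f (2 * i + 1) (2 * i + k%:Z)
      = f (2 * i) (2 * i + k%:Z) * f (2 * i + 1) (2 * i + n%:Z) / s
        + f (2 * i - 1) (2 * i + k%:Z) / c.
Proof.
move=> c_neq0 _ [x [adm f_cont]] s t k i k_le.
have rec b := @frieze_recurrence _ _ _ _ _ c_neq0 adm f_cont b k k_le.
have diag a j := @frieze_diag_shift_even _ _ _ _ _ c_neq0 adm f_cont a j.
have t_eq : t = f (2 * i - 1) (2 * i - 1 + n%:Z).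
  by rewrite /t -(diag 1 (i - 1)); congr f; lia.
have s_eq : s = f (2 * i) (2 * i + n%:Z).
  by rewrite /s -(diag 0 i) add0r.
split.
- rewrite t_eq; move: (rec (2 * i - 2)).
  have -> : 2 * i - 2 + 2 = 2 * i by lia.
  have -> : 2 * i - 2 + 1 = 2 * i - 1 by lia.
  have -> : 2 * i - 2 + n%:Z + 1 = 2 * i + n%:Z - 1 by lia.
  by have -> : 2 * i - 2 + k%:Z + 1 = 2 * i + k%:Z - 1 by lia.
- rewrite s_eq; move: (rec (2 * i - 1)).
  have -> : 2 * i - 1 + 2 = 2 * i + 1 by lia.
  have -> : 2 * i - 1 + 1 = 2 * i by lia.
  have -> : 2 * i - 1 + n%:Z + 1 = 2 * i + n%:Z by lia.
  by have -> : 2 * i - 1 + k%:Z + 1 = 2 * i + k%:Z by lia.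
Qed.
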